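(* Let $a,b,c,d\in\mathbb{C}$ be the vertices, in this order, of a convex quadrilateral, and let $\alpha$ and $\gamma$ be its inner angles at $a$ and $c$. Then \[ p(a,b,c,d)\le\frac{1}{\sin\frac{\alpha+\gamma}{2}}. \]
   Context: For four distinct points $a,b,c,d\in\mathbb{C}$, $p(a,b,c,d)=\frac{|a-b||c-d|+|a-d||b-c|}{|a-c||b-d|}$. *)

(* complex numbers are modelled as points of R^2 (R * R). *)
From Stdlib Require Import Reals Lra.
Open Scope R_scope.

Definition pt := (R * R)%type.

Definition sub (u v : pt) : pt := (fst u - fst v, snd u - snd v).
Definition dot (u v : pt) : R := fst u * fst v + snd u * snd v.
Definition cross (u v : pt) : R := fst u * snd v - snd u * fst v.
Definition dist (u v : pt) : R := sqrt (dot (sub u v) (sub u v)).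

Definition pval (a b c d : pt) : R :=
  (dist a b * dist c d + dist a d * dist b c) / (dist a c * dist b d).

(* orientation of the triangle (p, q, r): positive iff counterclockwise *)
Definition orient (p q r : pt) : R := cross (sub q p) (sub r p).

(* a, b, c, d (in this order) are the vertices of a (non-degenerate) convex
   quadrilateral: for every edge, the two remaining vertices lie strictly on
   the same side of the edge's line, with a common orientation. *)
Definition convex_quad (a b c d : pt) : Prop :=
  (0 < orient a b c /\ 0 < orient a b d /\
   0 < orient b c d /\ 0 < orient b c a /\
   0 < orient c d a /\ 0 < orient c d b /\
   0 < orient d a b /\ 0 < orient d a c) \/
  (orient a b c < 0 /\ orient a b d < 0 /\
   orient b c d < 0 /\ orient b c a < 0 /\
   orient c d a < 0 /\ orient c d b < 0 /\
   orient d a b < 0 /\ orient d a c < 0).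

Definition angle (p v q : pt) : R :=
  acos (dot (sub p v) (sub q v) / (dist p v * dist q v)).

(* Write X = |ab||cd|, Y = |ad||bc| and θ = α + γ.  Bretschneider's relation
   |ac|^2 |bd|^2 = X^2 + Y^2 - 2 X Y cos θ holds for every convex quadrilateral,
   and with cos θ = 1 - 2 sin^2 (θ/2) its right-hand side equals
   (X + Y)^2 sin^2 (θ/2) + (X - Y)^2 cos^2 (θ/2).  Hence
   |ac| |bd| >= (X + Y) sin (θ/2), which is the claim. *)

From Stdlib Require Import Reals Lra Psatz.
Open Scope R_scope.

Lemma dot_self_ge0 (u : pt) : 0 <= dot u u.
Proof. destruct u as [x y]; unfold dot; simpl; nra. Qed.

Lemma dist_sqr (u v : pt) : dist u v * dist u v = dot (sub u v) (sub u v).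
Proof. apply sqrt_sqrt, dot_self_ge0. Qed.

Lemma dist_sym (u v : pt) : dist u v = dist v u.
Proof. unfold dist; f_equal; destruct u, v; unfold dot, sub; simpl; ring. Qed.

Lemma dist_ge0 (u v : pt) : 0 <= dist u v.
Proof. apply sqrt_pos. Qed.

Lemma dist_gt0_of_cross (p v q : pt) :
  cross (sub p v) (sub q v) <> 0 -> 0 < dist p v /\ 0 < dist q v.
Proof.
  destruct p as [p1 p2], v as [v1 v2], q as [q1 q2].
  unfold dist, cross, dot, sub; simpl; intro hcross.
  split; apply sqrt_lt_R0.
  - destruct (Req_dec (p1 - v1) 0), (Req_dec (p2 - v2) 0); try nra.
  - destruct (Req_dec (q1 - v1) 0), (Req_dec (q2 - v2) 0); try nra.
Qed.

Lemma dot_sqr_add_cross_sqr (p v q : pt) :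
  dot (sub p v) (sub q v) ^ 2 + cross (sub p v) (sub q v) ^ 2
  = (dist p v * dist q v) ^ 2.
Proof.
  replace ((dist p v * dist q v) ^ 2)
    with ((dist p v * dist p v) * (dist q v * dist q v)) by ring.
  rewrite !dist_sqr; destruct p, v, q; unfold dot, cross, sub; simpl; ring.
Qed.

Section AngleAtVertex.

Variables p v q : pt.
Hypothesis dist_pv_gt0 : 0 < dist p v.
Hypothesis dist_qv_gt0 : 0 < dist q v.

Let N := dist p v * dist q v.
Let dt := dot (sub p v) (sub q v).
Let cr := cross (sub p v) (sub q v).

Let N_gt0 : 0 < N.
Proof. unfold N; nra. Qed.

Let cos_arg_bound : -1 <= dt / N <= 1.
Proof.
  pose proof (dot_sqr_add_cross_sqr p v q) as hsum; fold dt cr N in hsum.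
  assert (hdt : - N <= dt <= N) by nra.
  assert (dt / N * N = dt) by (field; lra).
  split; nra.
Qed.

Lemma cos_angle_mul : cos (angle p v q) * N = dt.
Proof. unfold angle; fold dt N; rewrite cos_acos by exact cos_arg_bound; field; lra. Qed.

Lemma sin_angle_mul : sin (angle p v q) * N = Rabs cr.
Proof.
  unfold angle; fold dt N; rewrite sin_acos by exact cos_arg_bound.
  apply Rsqr_inj.
  - pose proof (sqrt_pos (1 - (dt / N)²)); nra.
  - apply Rabs_pos.
  - rewrite <- Rsqr_abs, Rsqr_mult, Rsqr_sqrt.
    + pose proof (dot_sqr_add_cross_sqr p v q) as hsum; fold dt cr N in hsum.
      unfold Rsqr; field_simplify_eq; nra.
    + pose proof cos_arg_bound; unfold Rsqr; nra.
Qed.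

End AngleAtVertex.

Lemma angle_in_open_interval (p v q : pt) :
  cross (sub p v) (sub q v) <> 0 -> 0 < angle p v q < PI.
Proof.
  intro hcross.
  destruct (dist_gt0_of_cross p v q hcross) as [hp hq].
  pose proof (sin_angle_mul p v q hp hq) as hsin.
  pose proof (Rabs_pos_lt _ hcross) as habs.
  destruct (acos_bound (dot (sub p v) (sub q v) / (dist p v * dist q v)))
    as [[hlo | hlo] [hhi | hhi]]; unfold angle in hsin |- *.
  - lra.
  - rewrite hhi, sin_PI in hsin; lra.
  - rewrite <- hlo, sin_0 in hsin; lra.
  - rewrite <- hlo, sin_0 in hsin; lra.
Qed.

(* The sign condition makes [sin α sin γ] equal to the product of the crosses
   rather than its negative, so [α + γ] (not [α - γ]) appears. *)
Lemma cos_add_angle_mul (p v q p' v' q' : pt) :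
  0 < cross (sub p v) (sub q v) * cross (sub p' v') (sub q' v') ->
  cos (angle p v q + angle p' v' q')
    * ((dist p v * dist q v) * (dist p' v' * dist q' v'))
  = dot (sub p v) (sub q v) * dot (sub p' v') (sub q' v')
    - cross (sub p v) (sub q v) * cross (sub p' v') (sub q' v').
Proof.
  intro hsign.
  destruct (dist_gt0_of_cross p v q) as [hp hq]; [nra|].
  destruct (dist_gt0_of_cross p' v' q') as [hp' hq']; [nra|].
  rewrite <- (Rabs_pos_eq _ (Rlt_le _ _ hsign)), Rabs_mult.
  rewrite <- (cos_angle_mul p v q), <- (cos_angle_mul p' v' q'),
    <- (sin_angle_mul p v q), <- (sin_angle_mul p' v' q'), cos_plus by assumption.
  ring.
Qed.

Lemma bretschneider_relation (a b c d : pt) :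
  (dist a c * dist b d) ^ 2
  = (dist a b * dist c d) ^ 2 + (dist a d * dist b c) ^ 2
    - 2 * (dot (sub d a) (sub b a) * dot (sub b c) (sub d c)
           - cross (sub d a) (sub b a) * cross (sub b c) (sub d c)).
Proof.
  replace ((dist a c * dist b d) ^ 2)
    with ((dist a c * dist a c) * (dist b d * dist b d)) by ring.
  replace ((dist a b * dist c d) ^ 2)
    with ((dist a b * dist a b) * (dist c d * dist c d)) by ring.
  replace ((dist a d * dist b c) ^ 2)
    with ((dist a d * dist a d) * (dist b c * dist b c)) by ring.
  rewrite !dist_sqr; destruct a, b, c, d; unfold dot, cross, sub; simpl; ring.
Qed.

Lemma sqr_add_mul_sin_half_le (X Y t : R) : 0 <= X -> 0 <= Y ->
  ((X + Y) * sin (t / 2)) ^ 2 <= X ^ 2 + Y ^ 2 - 2 * X * Y * cos t.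
Proof.
  intros hX hY.
  replace t with (2 * (t / 2)) at 2 by field.
  rewrite cos_2a_sin.
  pose proof (SIN_bound (t / 2)) as hs.
  assert (0 <= (X - Y) ^ 2 * (1 - sin (t / 2) * sin (t / 2)))
    by (apply Rmult_le_pos; [apply pow2_ge_0 | nra]).
  nra.
Qed.

Lemma div_le_inv_of_sqr_le (N M s : R) :
  0 < N -> 0 < s -> 0 <= M -> (N * s) ^ 2 <= M ^ 2 -> N / M <= 1 / s.
Proof.
  intros hN hs hM hsqr.
  assert (hle : N * s <= M) by nra.
  assert (0 < M) by nra.
  apply (Rmult_le_reg_r (M * s)); [nra|].
  replace (N / M * (M * s)) with (N * s) by (field; lra).
  replace (1 / s * (M * s)) with M by (field; lra).
  exact hle.
Qed.

Theorem proposition4p1 (a b c d : pt) :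
  convex_quad a b c d ->
  pval a b c d <= 1 / sin ((angle d a b + angle b c d) / 2).
Proof.
  intro hconv.
  assert (hsign : 0 < cross (sub d a) (sub b a) * cross (sub b c) (sub d c)).
  { replace (cross (sub d a) (sub b a) * cross (sub b c) (sub d c))
      with (orient a b d * orient c d b)
      by (unfold orient; destruct a, b, c, d; unfold cross, sub; simpl; ring).
    destruct hconv; nra. }
  destruct (dist_gt0_of_cross d a b) as [hda hba]; [nra|].
  destruct (dist_gt0_of_cross b c d) as [hbc hdc]; [nra|].
  pose proof (angle_in_open_interval d a b) as halpha.
  pose proof (angle_in_open_interval b c d) as hgamma.
  pose proof (cos_add_angle_mul d a b b c d hsign) as hcos.
  rewrite (dist_sym d a), (dist_sym b a), (dist_sym d c) in *.
  unfold pval; apply div_le_inv_of_sqr_le.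
  - nra.
  - apply sin_gt_0; nra.
  - apply Rmult_le_pos; apply dist_ge0.
  - rewrite bretschneider_relation, <- hcos.
    eapply Rle_trans; [apply sqr_add_mul_sin_half_le; apply Rmult_le_pos; lra|].
    right; ring.
Qed.
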